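(* Let $h=(h_1,h_2)\in\mathbb{R}^{2*}$, $h\neq0$, let $\nu$ be an antinorm on $\mathbb{R}^2$ whose unit ball $\Omega=\{u:\nu(u)\ge1\}$ has properties $( * )$ and $( ** )$, and let $\mathcal H(h,u)=\langle h,u\rangle+\nu(u)$ for $u\in C=\operatorname{dom}\nu=\operatorname{cl}\mathbb{R}_+\Omega$. 1. If $(-h_1,h_2)\in\operatorname{int}\Omega^\diamond$, the maximum of $\mathcal H(h,u)$ over $u\in C$ is attained only at $u=0$. 2. If $(-h_1,h_2)\in\partial\Omega^\diamond$, write $(-h_1,h_2)=(\cosh_{\Omega^\diamond}\eta,\sinh_{\Omega^\diamond}\eta)$ for some angle $\eta$. Then $\max_{u\in C}\mathcal H(h,u)$ is attained at every point of $\{\lambda(\cosh_\Omega\theta,\sinh_\Omega\theta):\lambda\ge0,\ \theta\in{}^\diamond\eta\}$.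
   Context: An antinorm on $\mathbb{R}^2$ is $\nu:\mathbb{R}^2\to\mathbb{R}\cup\{-\infty\}$ concave, upper semicontinuous, positively homogeneous, with $\operatorname{dom}\nu\neq\varnothing$ and $\nu>0$ on $\operatorname{ri}\operatorname{dom}\nu$; its unit ball is nonempty, closed, convex, avoids $0$ and satisfies $\lambda\Omega\subset\Omega$ for $\lambda>1$. Points of $\mathbb{R}^2$: $(x,y)$; of $\mathbb{R}^{2*}$: $(p,q)$. $( * )$: $\lambda\Omega\cap\partial\Omega=\varnothing$ for $\lambda>1$. $( ** )$: the boundary rays $l_0,l_1$ of $C$ satisfy $\operatorname{dist}(l_k,\Omega)=0$. Antipolar: $\Omega^\diamond=\{(p,q):px-qy\ge1\ \forall(x,y)\in\Omega\}$. Hyperbolic convex trigonometric functions: fix $\omega_0=(x_0,y_0)\in\partial\Omega$, $\omega_0^\diamond=(p_0,q_0)\in\partial\Omega^\diamond$ with $p_0x_0-q_0y_0=1$; for $\omega=(x,y)\in\partial\Omega$, $\theta$ is twice the signed (counterclockwise positive) area of the region bounded by the segment $O\omega_0$, the arc of $\partial\Omega$ from $\omega_0$ to $\omega$ and the segment $\omega O$, and $(\cosh_\Omega\theta,\sinh_\Omega\theta)=(x,y)$; $\cosh_{\Omega^\diamond},\sinh_{\Omega^\diamond}$ are defined likewise; ${}^\diamond\eta$ is the set of $\theta$ with $\cosh_\Omega\theta\cosh_{\Omega^\diamond}\eta-\sinh_\Omega\theta\sinh_{\Omega^\diamond}\eta=1$. *)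

(* R : realType, points of R^2 and R^2* are pairs R * R. *)
From HB Require Import structures.
From mathcomp Require Import all_boot all_order all_algebra.
From mathcomp Require Import all_classical all_reals all_analysis.
Set Implicit Arguments. Unset Strict Implicit. Unset Printing Implicit Defensive.
Import Order.TTheory GRing.Theory Num.Theory.
Import numFieldNormedType.Exports.
Local Open Scope classical_set_scope.
Local Open Scope ring_scope.

Section Defs.
Variable R : realType.
Local Notation P := (R * R)%type.

Definition sc (t : R) (u : P) : P := (t * u.1, t * u.2).
Definition lc (t : R) (u : P) (s : R) (v : P) : P :=
  (t * u.1 + s * v.1, t * u.2 + s * v.2).

Definition bd (A : set P) : set P := closure A `\` interior A.

Definition affine_set (A : set P) : Prop :=
  forall x y t, A x -> A y -> A (lc (1 - t) x t y).
Definition aff (A : set P) : set P :=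
  \bigcap_(B in [set B | affine_set B /\ A `<=` B]) B.
Definition ri (A : set P) : set P :=
  [set u | A u /\ exists2 e : R, 0 < e &
     forall v, aff A v -> ball u e v -> A v].

Definition dom (nu : P -> \bar R) : set P := [set u | nu u != -oo%E].
Definition antinorm (nu : P -> \bar R) : Prop :=
  (forall u, nu u != +oo%E) /\ [/\
      (forall u v t, 0 < t < 1 ->
         (t%:E * nu u + (1 - t)%:E * nu v <= nu (lc t u (1 - t) v))%E),
      (* upper semicontinuous: superlevel sets are closed *)
      (forall a : R, closed [set u | (a%:E <= nu u)%E]),
      (forall (l : R) u, 0 < l -> nu (sc l u) = (l%:E * nu u)%E),
      dom nu !=set0 &
      (forall u, ri (dom nu) u -> (0 < nu u)%E)].

Definition unit_ball (nu : P -> \bar R) : set P := [set u | (1 <= nu u)%E].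

Definition prop_star (Om : set P) : Prop :=
  forall l : R, 1 < l -> (sc l @` Om) `&` bd Om = set0.

Definition ray (d : P) : set P := [set z | exists2 t : R, 0 <= t & z = sc t d].
Definition prop_2star (C Om : set P) : Prop :=
  forall d : P, d != (0, 0) -> ray d `<=` bd C ->
    forall e : R, 0 < e -> exists a b, [/\ ray d a, Om b & ball a e b].

Definition antipolar (Om : set P) : set P :=
  [set w | forall u, Om u -> 1 <= w.1 * u.1 - w.2 * u.2].

Definition det2 (a b : P) : R := a.1 * b.2 - a.2 * b.1.
Definition cone2 (a b : P) : set P :=
  [set z | exists s t : R, [/\ 0 <= s, 0 <= t & z = lc s a t b]].
Definition arc (S : set P) (w0 w : P) : set P := bd S `&` cone2 w0 w.
Definition sector (S : set P) (w0 w : P) : set P :=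
  [set z | exists t w', [/\ 0 <= t <= 1, arc S w0 w w' & z = sc t w']].
Definition area (A : set P) : R :=
  fine (((@lebesgue_measure R) \x (@lebesgue_measure R)) A)%E.
(* theta is the (hyperbolic convex) angle of w in S, with base point w0:
   twice the signed (counterclockwise positive) area of the sector *)
Definition hangle (S : set P) (w0 w : P) (theta : R) : Prop :=
  bd S w /\ theta = 2 * Num.sg (det2 w0 w) * area (sector S w0 w).
Definition hpt (S : set P) (w0 : P) (theta : R) : P :=
  xget (0, 0) [set w | hangle S w0 w theta].
Definition hcosh (S : set P) (w0 : P) (theta : R) : R := (hpt S w0 theta).1.
Definition hsinh (S : set P) (w0 : P) (theta : R) : R := (hpt S w0 theta).2.

Definition dangles (Om : set P) (w0 : P) (Omd : set P) (w0d : P) (eta : R)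
  : set R :=
  [set theta | hcosh Om w0 theta * hcosh Omd w0d eta
               - hsinh Om w0 theta * hsinh Omd w0d eta = 1].

Definition Ham (nu : P -> \bar R) (h u : P) : \bar R :=
  ((h.1 * u.1 + h.2 * u.2)%:E + nu u)%E.

Definition is_argmax (C : set P) (f : P -> \bar R) (u : P) : Prop :=
  C u /\ forall v, C v -> (f v <= f u)%E.

End Defs.

From HB Require Import structures.
From mathcomp Require Import all_boot all_order all_algebra.
From mathcomp Require Import all_classical all_reals all_analysis.
From mathcomp Require Import ring lra.
Import Order.TTheory GRing.Theory Num.Theory.
Import numFieldNormedType.Exports.
Local Open Scope classical_set_scope.
Local Open Scope ring_scope.

(* With [w = (-h.1, h.2)] and the antipolar pairing [<w, u> = w.1 u.1 - w.2 u.2]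
   one has [Ham nu h u = nu u - <w, u>].  If [w] lies in the antipolar of the
   unit ball [Om], then [nu <= <w, .>] on [C]: by homogeneity where [nu u > 0],
   and where [nu u = 0] because [a + s u] stays in [Om] for all [s > 0].  This
   uses [nu >= 0] on [C], which follows from upper semicontinuity, positivity on
   [ri C], and the interior point of [Om] provided by (star).  Hence [Ham <= 0],
   while [Ham 0 >= 0].  For [w] interior, pushing [w] towards [(-u.1, u.2)]
   makes the inequality strict at every [u <> 0].  For [w] on the boundary,
   [theta] in [{}^diamond eta] means that the point [p] of [bd Om] at angle
   [theta] has [<w, p> = 1 <= nu p], so [Ham >= 0] on the ray through [p]. *)

Definition pairing {R : realType} (w u : R * R) : R := w.1 * u.1 - w.2 * u.2.

Section Plane.
Context {R : realType}.
Implicit Types (u v w b : R * R) (t : R).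

Lemma lcE t s u v : lc t u s v = t *: u + s *: v.
Proof. by []. Qed.

Lemma pairingD w u v : pairing w (u + v) = pairing w u + pairing w v.
Proof. by rewrite /pairing /=; ring. Qed.

Lemma pairingZ w t u : pairing w (t *: u) = t * pairing w u.
Proof. by rewrite /pairing /= /GRing.scale /=; ring. Qed.

Lemma pairing_continuous u : continuous (pairing ^~ u).
Proof.
move=> w; apply: cvgB; apply: cvgM; [exact: cvg_fst | exact: cvg_cst |
                                     exact: cvg_snd | exact: cvg_cst].
Qed.

Lemma closed_antipolar (Om : set (R * R)) : closed (antipolar Om).
Proof.
have -> : antipolar Om = \bigcap_(u in Om) (pairing ^~ u @^-1` [set x | 1 <= x]).
  by apply/seteqP; split => w Hw u /Hw.
apply: closed_bigI => u _; apply: preimage_closed; last exact: closed_ge.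
by move=> w _; exact: pairing_continuous.
Qed.

Lemma segment_cvg b u : lc t b (1 - t) u @[t --> 0^'+] --> u.
Proof.
have -> : (fun t => lc t b (1 - t) u) = (fun t => t *: (b - u) + u).
  by apply/funext => t; rewrite lcE scalerBl scale1r scalerBr addrA addrAC.
have : t *: (b - u) + u @[t --> 0^'+] --> 0 *: (b - u) + u.
  apply: cvgD; last exact: cvg_cst.
  by apply: cvgZr_tmp; exact: cvg_at_right_filter cvg_id.
by rewrite scale0r add0r.
Qed.

Lemma interior_ri (A : set (R * R)) : interior A `<=` ri A.
Proof.
move=> x Ax; split; first exact: interior_subset.
by move: Ax => /nbhs_ballP[e e0 sA]; exists e => // v _ /sA.
Qed.

Lemma hpt_bd (S : set (R * R)) w0 theta :
  hpt S w0 theta != (0, 0) -> bd S (hpt S w0 theta).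
Proof. by rewrite /hpt; case: xgetP => [x _ []|_] //; rewrite eqxx. Qed.

End Plane.

Section Antinorm.
Context {R : realType} {nu : R * R -> \bar R}.
Hypothesis nuA : antinorm nu.
Local Notation Om := (unit_ball nu).
Implicit Types (u v w b : R * R) (t : R).

Lemma antinorm_fin u : dom nu u -> exists r, nu u = r%:E.
Proof. by case: nuA => /(_ u) + _; rewrite /dom /=; case: (nu u) => // r; exists r. Qed.

Lemma antinormZ t u : 0 < t -> nu (t *: u) = (t%:E * nu u)%E.
Proof. by case: nuA => _ [_ _ nuZ _ _]; exact: nuZ. Qed.

Lemma antinorm_ge_segment (a : R) b u :
  (forall t, 0 < t < 1 -> (a%:E <= nu (lc t b (1 - t) u))%E) -> (a%:E <= nu u)%E.
Proof.
case: nuA => _ [_ usc _ _ _] nu_ge.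
apply: (closed_cvg _ (usc a) _ _ (segment_cvg b u)).
near=> t; apply: nu_ge; apply/andP; split; near: t.
- exact: nbhs_right_gt.
- exact: nbhs_right_lt.
Unshelve. all: by end_near.
Qed.

Lemma unit_ball_dom u : Om u -> dom nu u.
Proof. by rewrite /unit_ball /dom /=; case: (nu u). Qed.

Lemma closed_unit_ball : closed Om.
Proof. by case: nuA => _ [_ usc _ _ _]; exact: usc. Qed.

Lemma dom_segment u v t : dom nu u -> dom nu v -> 0 < t < 1 ->
  dom nu (lc t u (1 - t) v).
Proof.
move=> /antinorm_fin[r Eu] /antinorm_fin[s Ev] t01.
case: nuA => _ [concave _ _ _ _]; have := concave u v t t01.
by rewrite Eu Ev /dom /=; case: (nu _).
Qed.

Lemma antinormD u v : (nu u + nu v <= nu (u + v)%R)%E.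
Proof.
case: nuA => _ [concave _ _ _ _].
have half01 : (0 < 2^-1 :> R) && (2^-1 < 1 :> R) by apply/andP; split; lra.
have := concave (2 *: u) (2 *: v) _ half01.
have -> : 1 - 2^-1 = 2^-1 :> R by field.
have -> : lc 2^-1 (2 *: u) 2^-1 (2 *: v) = u + v.
  by rewrite lcE !scalerA mulVf ?pnatr_eq0 // !scale1r.
by rewrite !antinormZ // !muleA -!EFinM mulVf ?pnatr_eq0 // !mul1e.
Qed.

Lemma interior_unit_ball u :
  prop_star Om -> Om u -> interior Om (2 *: u).
Proof.
move=> star Ou; apply: contrapT => not_int.
have two_gt1 : 1 < 2 :> R by lra.
have : ((sc 2 @` Om) `&` bd Om) (2 *: u).
  split; first by exists u.
  split => //; apply: subset_closure.
  by rewrite /unit_ball /= antinormZ // -(mule1 1%E) lee_pmul // ?lee_fin ?ler1n.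
by rewrite star.
Qed.

Lemma antipolar_pairing_ge w v r :
  antipolar Om w -> nu v = r%:E -> 0 < r -> r <= pairing w v.
Proof.
move=> Hw Ev r_gt0.
have : 1 <= pairing w (r^-1 *: v).
  by apply: Hw; rewrite /unit_ball /= antinormZ ?invr_gt0 // Ev -EFinM mulVf ?gt_eqF.
by rewrite pairingZ ler_pdivlMl // mulr1.
Qed.

(* [a + s *: v] stays in [Om] for every [s > 0]. *)
Lemma antipolar_pairing_ge0 a w v :
  Om a -> antipolar Om w -> (0 <= nu v)%E -> 0 <= pairing w v.
Proof.
move=> Oa Hw nu_v_ge0; rewrite leNgt; apply/negP => neg.
pose s := (`|pairing w a| + 1) / - pairing w v.
have s_gt0 : 0 < s by rewrite divr_gt0 ?oppr_gt0 // ltr_wpDl.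
have : 1 <= pairing w (a + s *: v).
  apply: Hw; rewrite /unit_ball /=.
  apply: (le_trans _ (antinormD _ _)); apply: le_trans (Oa : (1 <= nu a)%E) _.
  apply: leeDl; rewrite antinormZ // mule_ge0 // lee_fin; exact: ltW.
rewrite pairingD pairingZ.
have -> : s * pairing w v = - (`|pairing w a| + 1).
  by rewrite /s invrN mulrN mulNr divfK ?lt_eqF.
have := ler_norm (pairing w a); lra.
Qed.

Section InteriorPoint.
Context {b : R * R}.
Hypothesis b_int : interior Om b.

Lemma interior_dom_segment u t : dom nu u -> 0 < t < 1 ->
  interior (dom nu) (lc t b (1 - t) u).
Proof.
move=> Du /andP[t_gt0 t_lt1].
pose f v := t^-1 *: (v - (1 - t) *: u).
have fK v : lc t (f v) (1 - t) u = v.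
  by rewrite lcE /f scalerA mulfV ?gt_eqF // scale1r subrK.
have f_cont : {for lc t b (1 - t) u, continuous f}.
  by apply: continuousZl_tmp; apply: cvgB; [exact: cvg_id | exact: cvg_cst].
have : nbhs (lc t b (1 - t) u) (f @^-1` Om).
  apply: f_cont; rewrite /f lcE addrK scalerA mulVf ?gt_eqF // scale1r.
  exact: b_int.
apply: filterS => v /= Ofv; rewrite -(fK v).
by apply: dom_segment => //; [exact: unit_ball_dom | apply/andP].
Qed.

Lemma antinorm_ge0 u : dom nu u -> (0 <= nu u)%E.
Proof.
case: nuA => _ [_ _ _ _ ri_pos] Du.
apply: (antinorm_ge_segment 0 b) => t t01; apply/ltW/ri_pos.
exact/interior_ri/interior_dom_segment.
Qed.

Lemma antinorm0_ge0 : (0 <= nu 0%R)%E.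
Proof.
apply: (antinorm_ge_segment 0 b) => t /andP[t_gt0 _].
rewrite lcE scaler0 addr0 antinormZ // mule_ge0 ?lee_fin ?(ltW t_gt0) //.
exact: le_trans lee01 (interior_subset b_int : (1 <= nu b)%E).
Qed.

Lemma antinorm_le_pairing w v :
  antipolar Om w -> dom nu v -> (nu v <= (pairing w v)%:E)%E.
Proof.
move=> Hw Dv; have nu_v_ge0 := antinorm_ge0 _ Dv.
have [r Ev] := antinorm_fin _ Dv; rewrite Ev lee_fin.
have [->|r_neq0] := eqVneq r 0.
  exact: (antipolar_pairing_ge0 _ _ _ (interior_subset b_int) Hw nu_v_ge0).
by apply: (antipolar_pairing_ge _ _ _ Hw Ev); rewrite lt_def r_neq0 -lee_fin -Ev.
Qed.

End InteriorPoint.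
End Antinorm.

Section Hamiltonian.
Context {R : realType} {nu : R * R -> \bar R} {h : R * R}.
Local Notation w := (- h.1, h.2).
Local Notation Om := (unit_ball nu).

Lemma HamE u : Ham nu h u = (nu u - (pairing w u)%:E)%E.
Proof. by rewrite /Ham addeC /pairing /= EFinN; congr (_ + _)%E; congr EFin; ring. Qed.

Lemma is_argmax_Ham u :
  (forall v, dom nu v -> (Ham nu h v <= 0)%E) -> (0 <= Ham nu h u)%E ->
  is_argmax (dom nu) (Ham nu h) u.
Proof.
move=> Ham_le0 Ham_u_ge0; split; last by move=> v /Ham_le0/le_trans; apply.
by move: Ham_u_ge0; rewrite /dom /Ham /=; case: (nu u).
Qed.

(* Moving [w] inside the antipolar along [(-v.1, v.2)] lowers its pairing
   with [v] by a multiple of [|v|^2]. *)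
Lemma interior_antipolar_lt (A : set (R * R)) v (r : \bar R) :
  interior (antipolar A) w -> v != (0, 0) ->
  (forall w', antipolar A w' -> (r <= (pairing w' v)%:E)%E) ->
  (r < (pairing w v)%:E)%E.
Proof.
move=> w_int v_neq0 r_le.
have v2_gt0 : 0 < v.1 ^+ 2 + v.2 ^+ 2.
  rewrite lt_def addr_ge0 ?sqr_ge0 // andbT paddr_eq0 ?sqr_ge0 // !sqrf_eq0.
  apply: contra v_neq0 => /andP[/eqP v1_0 /eqP v2_0].
  by rewrite [v]surjective_pairing v1_0 v2_0.
have /filter_ex[c [c_gt0 Hc]] : \forall c \near 0^'+,
    0 < c /\ antipolar A (lc c (w - (v.1, - v.2)) (1 - c) w).
  near=> c; split; near: c; first exact: nbhs_right_gt.
  exact: (segment_cvg (w - (v.1, - v.2)) w _ w_int).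
apply: le_lt_trans (r_le _ Hc) _; rewrite lte_fin.
have -> : pairing (lc c (w - (v.1, - v.2)) (1 - c) w) v =
          pairing w v - c * (v.1 ^+ 2 + v.2 ^+ 2).
  by rewrite /pairing /= /GRing.scale /=; ring.
by have := mulr_gt0 c_gt0 v2_gt0; lra.
Unshelve. all: by end_near.
Qed.

Hypothesis nuA : antinorm nu.
Context {b : R * R}.
Hypothesis b_int : interior Om b.

Lemma Ham0_ge0 : (0 <= Ham nu h 0%R)%E.
Proof.
by rewrite HamE /pairing /= !mulr0 subr0 sube0; apply: (antinorm0_ge0 nuA b_int).
Qed.

Lemma Ham_le0 v : antipolar Om w -> dom nu v -> (Ham nu h v <= 0)%E.
Proof.
by move=> Hw Dv; rewrite HamE sube_le0; apply: (antinorm_le_pairing nuA b_int).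
Qed.

Lemma argmax_Ham_interior :
  interior (antipolar Om) w ->
  [set u | is_argmax (dom nu) (Ham nu h) u] = [set (0, 0)].
Proof.
move=> w_int; have /Ham_le0 Hle := interior_subset w_int.
have zero_max := is_argmax_Ham _ Hle Ham0_ge0.
apply/seteqP; split => [u [Du u_max]|_ ->] //=.
apply: contrapT => /eqP u_neq0.
have : (Ham nu h u < 0)%E.
  rewrite HamE suber_lt0 //; apply: interior_antipolar_lt w_int u_neq0 _.
  by move=> w' Hw'; apply: (antinorm_le_pairing nuA b_int).
by rewrite ltNge (le_trans Ham0_ge0) // u_max //; case: zero_max.
Qed.

Lemma argmax_Ham_ray p l : antipolar Om w -> Om p -> pairing w p = 1 -> 0 <= l ->
  is_argmax (dom nu) (Ham nu h) (l *: p).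
Proof.
move=> Hw Op wp1 l_ge0; apply: is_argmax_Ham => [v|]; first exact: Ham_le0.
have [->|l_neq0] := eqVneq l 0; first by rewrite scale0r Ham0_ge0.
have [rp Ep] : exists rp, nu p = rp%:E.
  exact: antinorm_fin nuA _ (unit_ball_dom _ Op).
rewrite HamE antinormZ ?lt_def ?l_neq0 // Ep pairingZ wp1 mulr1.
rewrite -EFinM -EFinB lee_fin subr_ge0 ler_peMr // -lee_fin -Ep.
exact: Op.
Qed.

End Hamiltonian.

Theorem proposition5 (R : realType) (h : R * R) (nu : R * R -> \bar R)
  (w0 w0d : R * R) :
  h != (0, 0) ->
  antinorm nu ->
  prop_star (unit_ball nu) ->
  prop_2star (dom nu) (unit_ball nu) ->
  (* base points for the hyperbolic convex trigonometric functions *)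
  bd (unit_ball nu) w0 ->
  bd (antipolar (unit_ball nu)) w0d ->
  w0d.1 * w0.1 - w0d.2 * w0.2 = 1 ->
  (* part 1 *)
  (interior (antipolar (unit_ball nu)) (- h.1, h.2) ->
     [set u | is_argmax (dom nu) (Ham nu h) u] = [set (0, 0)])
  /\
  (* part 2 *)
  (bd (antipolar (unit_ball nu)) (- h.1, h.2) ->
     forall eta : R,
       (hcosh (antipolar (unit_ball nu)) w0d eta,
        hsinh (antipolar (unit_ball nu)) w0d eta) = (- h.1, h.2) ->
     forall (l theta : R), 0 <= l ->
       dangles (unit_ball nu) w0 (antipolar (unit_ball nu)) w0d eta theta ->
       is_argmax (dom nu) (Ham nu h)
         (l * hcosh (unit_ball nu) w0 theta, l * hsinh (unit_ball nu) w0 theta)).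
Proof.
(* Of the base points only [w0 \in unit_ball nu] matters. *)
move=> _ nuA star _ w0_bd _ _.
have b_int := interior_unit_ball nuA _ star (closed_unit_ball nuA _ w0_bd.1).
split; first by apply: (argmax_Ham_interior nuA b_int).
move=> w_bd eta [cosh_eta sinh_eta] l theta l_ge0.
rewrite /dangles /= cosh_eta sinh_eta /hcosh /hsinh.
set p := hpt _ w0 theta => p_eta.
have wp1 : pairing (- h.1, h.2) p = 1 by rewrite -p_eta /pairing /=; ring.
have p_bd : bd (unit_ball nu) p.
  apply: hpt_bd; apply/eqP => p0.
  by move: wp1; rewrite /p p0 /pairing /= !mulr0 subr0 => /eqP; rewrite eq_sym oner_eq0.
apply: (argmax_Ham_ray nuA b_int) => //; first exact: closed_antipolar w_bd.1.
exact: closed_unit_ball nuA _ p_bd.1.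
Qed.
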